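(* Let $\varphi: S\to R$ be a ring morphism, $W\in S$, $(X,d)$ a finite rank matrix factorisation of $W$ over $R$ with fixed homogeneous $R$-basis $\{\xi_i\}$, and $\mathbf{t}=\{t_1,\ldots,t_n\}$ a quasi-regular sequence in $R$ with odd $R$-linear maps $\lambda_j$ on $X$ satisfying $\lambda_j d + d\lambda_j = t_j\cdot 1_X$. Suppose given $S$-linear maps $\sigma: R/\mathbf{t}R\to K(\mathbf{t})$ (a morphism of complexes) and $h$ of degree $-1$ on $K(\mathbf{t})$ with $\pi\sigma=1$, $\sigma\pi = 1+\delta h + h\delta$, $h^2=0$, $h\sigma = 0$, $\pi h = 0$. Let $\sigma_\infty = \sum_{m\ge0}(hd)^m\sigma: X/\mathbf{t}X\to X\otimes_R K(\mathbf{t})$, $\psi = \varepsilon\circ\sigma_\infty: X/\mathbf{t}X\to X[n]$, and $\vartheta = (-1)^n\lambda_1\cdots\lambda_n: X[n]\to X/\mathbf{t}X$ (the map $X\to X$ followed by the quotient). Then $\psi\circ\vartheta = 1$ in the homotopy category $\mathrm{hf}(S,W)$, hence $e = \vartheta\circ\psi$ is an idempotent endomorphism of $X/\mathbf{t}X$ in $\mathrm{hf}(S,W)$, and \[ e = (-1)^n\lambda_1\cdots\lambda_n\,\varepsilon\,(hd)^n\sigma. \]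
   Context: All rings commutative. Linear factorisation of $W$ over $R$: $\mathbb{Z}/2$-graded $R$-module with odd $R$-linear $d$, $d^2=W\cdot1$; morphisms are even maps commuting with differentials; $\mathrm{hf}(S,W)$ is the homotopy category of linear factorisations of $W$ over $S$ (all $R$-modules being viewed as $S$-modules via $\varphi$). $X[n]$ is the $n$-fold suspension. The Koszul complex $K(\mathbf{t})$ is the exterior algebra on free symbols $\mathrm{d}t_1,\ldots,\mathrm{d}t_n$ of degree $-1$ with differential $\delta$ = contraction with $\sum_it_i(\mathrm{d}t_i)^*$; $\pi: K(\mathbf{t})\to R/\mathbf{t}R$ is the augmentation. $X\otimes_RK(\mathbf{t})$ is formed with the $\mathbb{Z}/2$-folding of $K(\mathbf{t})$ and has differential $d\otimes1+1\otimes\delta$. The maps $h,\sigma$ are extended using the basis by $h(\xi_i\otimes m) = (-1)^{|\xi_i|}\xi_i\otimes h(m)$, $\sigma(\xi_i\otimes p) = \xi_i\otimes\sigma(p)$, and $d$ means $d\otimes 1$. The map $\varepsilon: X\otimes K(\mathbf{t})\to X[n]$ sends $x\otimes\mathrm{d}t_1\cdots\mathrm{d}t_n\mapsto(-1)^{n|x|}x$ and vanishes on the other exterior degrees. $X/\mathbf{t}X = X\otimes_RR/\mathbf{t}R$. *)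

From HB Require Import structures.
From mathcomp Require Import all_boot all_order all_algebra.
Set Implicit Arguments. Unset Strict Implicit. Unset Printing Implicit Defensive.
Import Order.TTheory GRing.Theory.
Local Open Scope ring_scope.

Section KoszulModel.
Variables (S R : comPzRingType) (phi : {rmorphism S -> R}).
Variables (n k : nat) (t : 'I_n -> R).

(* Free R-module with basis dt_I = dt_{i1} ... dt_{im}, I = {i1 < ... < im};
   dt_I has exterior degree #|I| (cohomological degree -#|I|). *)
Local Notation KT := {ffun {set 'I_n} -> R^o}.

Definition khomog (m : nat) (x : KT) : Prop := forall J : {set 'I_n}, #|J| != m -> x J = 0.

(* delta = contraction with sum_i t_i (dt_i)^* :
   delta(dt_I) = sum_{i in I} (-1)^{#{j in I | j < i}} t_i dt_{I \ i}.
   Coefficient of dt_J in delta x: *)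
Definition kdelta (x : KT) : KT :=
  [ffun J : {set 'I_n} => \sum_(i : 'I_n | i \notin J)
      (-1) ^+ #|[set j in J | (j < i)%N]| * t i * x (i |: J)].

Definition inI (a : R) : Prop := exists c : 'I_n -> R, a = \sum_(i < n) t i * c i.

Definition quasi_regular : Prop :=
  forall (m : nat) (x : KT), (0 < m)%N -> khomog m x -> kdelta x = 0 ->
    exists y : KT, x = kdelta y.

(* S-linearity (all R-modules viewed as S-modules via phi) *)
Definition Slinear (V U : lmodType R) (f : V -> U) : Prop :=
  forall (s : S) (a b : V), f (phi s *: a + b) = phi s *: f a + f b.

(* The homotopy data (sigma, h).  sigma : R/tR -> K(t) is represented by a map
   sigma0 : R -> K(t) vanishing on tR; pi : K(t) -> R/tR is x |-> class of x(set0). *)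
Definition SDR_data (sigma0 : R -> KT) (h : KT -> KT) : Prop :=
      (forall (s : S) (a b : R), sigma0 (phi s * a + b) = phi s *: sigma0 a + sigma0 b) /\
      (forall a, inI a -> sigma0 a = 0) /\
      (* sigma is a morphism of complexes (R/tR sits in degree 0) *)
      (forall a, khomog 0 (sigma0 a)) /\ (forall a, kdelta (sigma0 a) = 0) /\
      Slinear h /\ (forall m (x : KT), khomog m x -> khomog m.+1 (h x)) /\
      (forall a, inI (sigma0 a set0 - a)) /\
        (forall x : KT, sigma0 (x set0) = x + kdelta (h x) + h (kdelta x)) /\
      [/\ forall x : KT, h (h x) = 0, forall a, h (sigma0 a) = 0 & forall x : KT, inI (h x set0)].

(* X = free R-module with homogeneous basis xi_1..xi_k, xi_i of parity p i;
   elements are column vectors, R-linear maps are matrices. *)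
Variable p : 'I_k -> bool.

Definition odd_mx (M : 'M[R]_k) : Prop := forall i j, p i = p j -> M i j = 0.

Definition vhomog (q : 'I_k -> bool) (b : bool) (v : 'cV[R]_k) : Prop :=
  forall i, q i != b -> v i 0 = 0.

(* congruence modulo tX, i.e. equality in X/tX *)
Definition eqmodt (a b : 'cV[R]_k) : Prop := forall i, inI (a i 0 - b i 0).

Definition pshift (i : 'I_k) : bool := p i (+) odd n.

(* ---------- X (x) K(t) = (+)_i xi_i (x) K(t) ---------- *)
Local Notation XK := {ffun 'I_k -> KT}.

Variables (D : 'M[R]_k) (h : KT -> KT) (sigma0 : R -> KT) (lam : 'I_n -> 'M[R]_k).

Definition dX1 (z : XK) : XK := [ffun i => \sum_(j < k) D i j *: z j].
(* h(xi_i (x) m) = (-1)^{|xi_i|} xi_i (x) h m *)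
Definition hX (z : XK) : XK := [ffun i => (-1) ^+ p i *: h (z i)].
(* sigma(xi_i (x) a) = xi_i (x) sigma a, on lifts of elements of X/tX *)
Definition sigX (a : 'cV[R]_k) : XK := [ffun i => sigma0 (a i 0)].
(* epsilon(x (x) dt_1...dt_n) = (-1)^{n|x|} x, zero on other exterior degrees *)
Definition epsX (z : XK) : 'cV[R]_k := \col_i ((-1) ^+ (n * p i) * z i setT).

(* sigma_infty = sum_{m>=0} (hd)^m sigma; terms with m > n vanish since
   (hd)^m sigma lands in exterior degree m. *)
Definition sig_inf (a : 'cV[R]_k) : XK :=
  \sum_(m < n.+1) iter m (fun z => hX (dX1 z)) (sigX a).

Definition psi (a : 'cV[R]_k) : 'cV[R]_k := epsX (sig_inf a).

(* lambda_1 ... lambda_n (composition, lambda_n applied first) *)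
Definition lamprod (v : 'cV[R]_k) : 'cV[R]_k :=
  foldr (fun j w => lam j *m w) v (enum 'I_n).

Definition theta (v : 'cV[R]_k) : 'cV[R]_k := (-1) ^+ n *: lamprod v.

Definition e_idem (a : 'cV[R]_k) : 'cV[R]_k := theta (psi a).

End KoszulModel.

From HB Require Import structures.
From mathcomp Require Import all_boot all_order all_algebra ring.
Set Implicit Arguments. Unset Strict Implicit. Unset Printing Implicit Defensive.
Import GRing.Theory.
Local Open Scope ring_scope.
Lemma ffunBE (aT : finType) (V : zmodType) (f g : {ffun aT -> V}) x :
  (f - g) x = f x - g x.
Proof. by rewrite !ffunE. Qed.

Lemma ffunZE (R : pzRingType) (aT : finType) (V : lmodType R) (c : R) (f : {ffun aT -> V}) x :
  (c *: f) x = c *: f x.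
Proof. by rewrite ffunE. Qed.

Section Perturbation.
Variables (V : zmodType) (d delta h : {additive V -> V}) (P : V -> V).
Hypothesis hh : forall x, h (h x) = 0.
Hypothesis P_def : forall x, P x = x + delta (h x) + h (delta x).
Hypothesis P_dh : forall x, P (d (h x)) = 0.
Hypothesis delta_d : forall x, delta (d x) = - d (delta x).
Hypothesis h_dd : forall x, h (d (d x)) = d (d (h x)).

Definition hd (x : V) : V := h (d x).
Definition dtot (x : V) : V := d x + delta x.
Definition h_inf N (x : V) : V := \sum_(m < N.+1) iter m hd (h x).
Definition P_inf N (x : V) : V := \sum_(m < N.+1) iter m hd (P x).

Lemma iter_hdD m : {morph iter m hd : x y / x + y}.
Proof. by elim: m => [|m IH] x y //=; rewrite IH /hd !raddfD. Qed.

Lemma iter_hdB m : {morph iter m hd : x y / x - y}.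
Proof. by elim: m => [|m IH] x y //=; rewrite IH /hd !raddfB. Qed.

Lemma h_iter_hd_h m x : h (iter m hd (h x)) = 0.
Proof. by case: m => [|m] /=; rewrite hh. Qed.

Lemma delta_h x : delta (h x) = P x - x - h (delta x).
Proof. by apply/eqP; rewrite P_def eq_sym !subr_eq -addrA addrC. Qed.

Lemma delta_hd x : delta (hd x) = P (d x) - d x + hd (delta x).
Proof. by rewrite /hd delta_h delta_d raddfN opprK. Qed.

Lemma hd_addr_dh x y : hd (x + d (h y)) = hd x.
Proof. by rewrite /hd !raddfD h_dd hh !raddf0 addr0. Qed.

Lemma delta_iter_hd_h m z :
  delta (iter m.+1 hd (h z)) + d (iter m hd (h z)) =
  iter m.+1 hd (P z - z - h (delta z)).
Proof.
have step y : P (d y) = 0 -> delta (hd y) + d y = hd (delta y).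
  by move=> Pdy; rewrite delta_hd Pdy sub0r addrAC addNr add0r.
elim: m => [|m IH]; first by rewrite step ?delta_h.
rewrite [in RHS]iterS -IH !iterS.
have [w ->] : exists w, iter m hd (h z) = h w.
  by case: m {IH} => [|m]; [exists z | exists (d (iter m hd (h z)))].
by rewrite hd_addr_dh step //; apply: P_dh.
Qed.

Lemma iter_hd0 m : iter m hd 0 = 0.
Proof. by elim: m => //= m ->; rewrite /hd !raddf0. Qed.

Lemma iter_hd_P_d m x : h x = 0 -> delta x = 0 ->
  iter m hd (P (d x)) = delta (iter m.+1 hd x) + d (iter m hd x).
Proof.
move=> hx0 dx0; case: m => [|m].
  by rewrite /= delta_hd dx0 /hd !raddf0 addr0 subrK.
have hdd_x : hd (d x) = 0 by rewrite /hd h_dd hx0 !raddf0.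
have hdeltad_x : h (delta (d x)) = 0 by rewrite delta_d dx0 !raddf0 ?oppr0.
rewrite (iterSr m.+1 hd x) (iterSr m hd x) (delta_iter_hd_h m (d x)).
by rewrite hdeltad_x subr0 iter_hdB [iter m.+1 hd (d x)]iterSr hdd_x iter_hd0 subr0.
Qed.

Lemma delta_h_inf N z :
  delta (h_inf N z) + \sum_(m < N) d (iter m hd (h z)) =
  \sum_(m < N.+1) iter m hd (P z - z - h (delta z)).
Proof.
rewrite raddf_sum big_ord_recl -addrA -big_split [in RHS]big_ord_recl.
congr (_ + _); first exact: delta_h.
by apply: eq_bigr => i _; exact: delta_iter_hd_h.
Qed.

Lemma h_inf_dtot N z :
  h_inf N (dtot z) = \sum_(m < N.+1) (iter m.+1 hd z + iter m hd (h (delta z))).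
Proof. by apply: eq_bigr => m _; rewrite raddfD iter_hdD iterSr. Qed.

Lemma P_inf_homotopy N z :
  P_inf N z + (d (iter N hd (h z)) + iter N.+1 hd z) =
  z + dtot (h_inf N z) + h_inf N (dtot z).
Proof.
have split_term m : iter m hd (P z - z - h (delta z)) +
    (iter m.+1 hd z + iter m hd (h (delta z))) =
    iter m hd (P z) + (iter m.+1 hd z - iter m hd z).
  rewrite !iter_hdB addrACA addNr addr0 addrAC -addrA.
  by congr (_ + _); rewrite addrC.
have sum_eq : \sum_(m < N.+1) iter m hd (P z - z - h (delta z)) +
    \sum_(m < N.+1) (iter m.+1 hd z + iter m hd (h (delta z))) =
    P_inf N z + (iter N.+1 hd z - z).
  rewrite -big_split (eq_bigr _ (fun (i : 'I_N.+1) _ => split_term i)) big_split.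
  rewrite -(big_mkord xpredT (fun m => iter m.+1 hd z - iter m hd z)).
  by rewrite telescope_sumr.
have d_h_inf : d (h_inf N z) =
    \sum_(m < N) d (iter m hd (h z)) + d (iter N hd (h z)).
  by rewrite raddf_sum big_ord_recr.
rewrite {1}/dtot d_h_inf [X in z + X]addrAC [_ + delta _]addrC delta_h_inf.
rewrite h_inf_dtot -addrA [_ + d _]addrC -addrA sum_eq.
rewrite addrCA [z + _]addrCA [z + _]addrCA subrr addr0; exact: addrCA.
Qed.

End Perturbation.

Lemma dtot_sub_anticomm (V : zmodType) (d delta E L : {additive V -> V}) (c : V -> V) :
  (forall y, d (E y) + E (d y) = 0) -> (forall y, delta (L y) + L (delta y) = 0) ->
  (forall y, delta (E y) + E (delta y) = c y) -> (forall y, d (L y) + L (d y) = c y) ->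
  forall x, dtot d delta (E x - L x) + (E (dtot d delta x) - L (dtot d delta x)) = 0.
Proof.
have regroup (a1 a2 a3 a4 b1 b2 b3 b4 : V) :
    (a1 + a2) + (a3 + a4) + ((b1 + b3) + (b2 + b4)) =
    (a1 + b1) + (a3 + b3) + ((a2 + b2) + (a4 + b4)).
  by rewrite (addrACA a1) (addrACA (a1 + a3)) (addrACA a1) (addrACA a2).
move=> dE deltaL deltaE dL x; rewrite /dtot !raddfB !raddfD /= regroup -!opprD.
by rewrite dE deltaE dL deltaL add0r addr0 subrr.
Qed.

Section Koszul.
Variables (R : comPzRingType) (n : nat) (t : 'I_n -> R).
Local Notation KT := {ffun {set 'I_n} -> R^o}.

Fact kdelta_is_linear : linear (kdelta t).
Proof.
move=> c x y; apply/ffunP=> J; rewrite !ffunE scaler_sumr -big_split /=.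
by apply: eq_bigr => i _; rewrite !ffunE mulrDr mulrCA.
Qed.
HB.instance Definition _ := GRing.isLinear.Build R KT KT _ (kdelta t) kdelta_is_linear.

Lemma kdelta_setT x : kdelta t x setT = 0.
Proof. by rewrite ffunE big_pred0 // => i; rewrite in_setT. Qed.

Lemma inI0 : inI t 0.
Proof. by exists (fun=> 0); rewrite big1 // => i _; rewrite mulr0. Qed.

Lemma inID a b : inI t a -> inI t b -> inI t (a + b).
Proof.
move=> [c ->] [c' ->]; exists (fun i => c i + c' i).
by rewrite -big_split /=; apply: eq_bigr => i _; rewrite mulrDr.
Qed.

Lemma inIMl c a : inI t a -> inI t (c * a).
Proof.
move=> [f ->]; exists (fun i => c * f i); rewrite mulr_sumr.
by apply: eq_bigr => i _; rewrite mulrCA.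
Qed.

Lemma inIN a : inI t a -> inI t (- a).
Proof. by move=> Ia; rewrite -mulN1r; apply: inIMl. Qed.

Lemma inIB a b : inI t a -> inI t b -> inI t (a - b).
Proof. by move=> Ia Ib; apply/inID/inIN. Qed.

Lemma inI_t j c : inI t (t j * c).
Proof.
exists (fun i => if i == j then c else 0).
by rewrite (bigD1 j) //= eqxx big1 ?addr0 // => i /negbTE ->; rewrite mulr0.
Qed.

Lemma inI_sum (I : finType) (F : I -> R) : (forall i, inI t (F i)) -> inI t (\sum_i F i).
Proof. by move=> IF; elim/big_rec: _ => [|i x _]; [exact: inI0 | exact: inID]. Qed.

Definition ksign (J : {set 'I_n}) (i : 'I_n) : R := (-1) ^+ #|[set j in J | (j < i)%N]|.

Definition kwedge (j : 'I_n) (x : KT) : KT :=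
  [ffun J : {set 'I_n} => if j \in J then ksign J j * x (J :\ j) else 0].

Fact kwedge_is_linear j : linear (kwedge j).
Proof.
move=> c x y; apply/ffunP=> J; rewrite !ffunE.
case: ifP => _; last by rewrite scaler0 addr0.
by rewrite mulrDr; congr (_ + _); exact: mulrCA.
Qed.
HB.instance Definition _ j :=
  GRing.isLinear.Build R KT KT _ (kwedge j) (kwedge_is_linear j).

Lemma kwedge_set0 j x : kwedge j x set0 = 0.
Proof. by rewrite ffunE in_set0. Qed.

Lemma ksignU (J : {set 'I_n}) (i j : 'I_n) : i \notin J -> ksign (i |: J) j = (-1) ^+ (i < j)%N * ksign J j.
Proof.
move=> iNJ; rewrite /ksign.
have -> : [set l in i |: J | (l < j)%N] =
    if (i < j)%N then i |: [set l in J | (l < j)%N] else [set l in J | (l < j)%N].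
  apply/setP => l; rewrite !(in_setU1, inE) /=.
  by case: ifP => ij; rewrite !(in_setU1, inE); case: eqP => [->|]; rewrite ?eqxx ?ij ?andbF.
case: ifP => _; last by rewrite mul1r.
by rewrite cardsU1 inE (negbTE iNJ) exprS.
Qed.

Lemma ksignD (J : {set 'I_n}) (i j : 'I_n) : j \in J -> ksign (J :\ j) i = (-1) ^+ (j < i)%N * ksign J i.
Proof.
move=> jJ; rewrite -{2}(setD1K jJ) ksignU ?setD11 //.
by rewrite mulrA -expr2 sqrr_sign mul1r.
Qed.

Lemma sign_ltn_flip (i j : 'I_n) : i != j ->
  (-1) ^+ (i < j)%N = - (-1) ^+ (j < i)%N :> R.
Proof.
move=> /negbTE ij; case: ltngtP => [||/val_inj/eqP]; rewrite ?ij //= ?opprK //.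
Qed.

Lemma kdeltaE (x : KT) (J : {set 'I_n}) :
  kdelta t x J = \sum_(i | i \notin J) ksign J i * t i * x (i |: J).
Proof. by rewrite ffunE. Qed.

Lemma kwedgeE j (x : KT) (J : {set 'I_n}) : kwedge j x J = if j \in J then ksign J j * x (J :\ j) else 0.
Proof. by rewrite ffunE. Qed.

Lemma kdelta_kwedge_in j (x : KT) (J : {set 'I_n}) : j \in J ->
  kdelta t (kwedge j x) J + kwedge j (kdelta t x) J = t j * x J.
Proof.
move=> jJ; rewrite kwedgeE jJ kdeltaE [X in ksign J j * X]kdeltaE.
rewrite [X in _ * X](bigD1 j) ?setD11 //= setD1K // ksignD // ltnn mul1r.
rewrite mulrDr !mulrA -expr2 sqrr_sign mul1r addrCA -[RHS]addr0; congr (_ + _).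
rewrite [X in _ * X](eq_bigl (fun i => i \notin J)) => [|i]; last first.
  by rewrite in_setD1; case: eqP => [->|]; rewrite ?jJ ?andbT.
rewrite mulr_sumr -big_split big1 //= => i iNJ.
have ij : i != j by apply: contraNneq iNJ => ->.
rewrite kwedgeE in_setU1 jJ orbT.
have -> : (i |: J) :\ j = i |: (J :\ j).
  apply/setP => l; rewrite !(in_setD1, in_setU1).
  by case: eqP => // ->; rewrite eq_sym (negbTE ij).
rewrite ksignU // ksignD // (sign_ltn_flip ij); ring.
Qed.

Lemma kdelta_kwedge_notin j (x : KT) (J : {set 'I_n}) : j \notin J ->
  kdelta t (kwedge j x) J + kwedge j (kdelta t x) J = t j * x J.
Proof.
move=> jNJ; rewrite [kwedge j _ J]kwedgeE (negbTE jNJ) addr0 kdeltaE (bigD1 j) //=.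
rewrite big1 => [|i /andP[_ ij]]; last first.
  by rewrite kwedgeE in_setU1 eq_sym (negbTE ij) (negbTE jNJ) mulr0.
rewrite kwedgeE setU11 ksignU // ltnn mul1r setU1K // addr0.
by transitivity (ksign J j ^+ 2 * (t j * x J)); [ring | rewrite sqrr_sign mul1r].
Qed.

Lemma kdelta_kwedge j (x : KT) : kdelta t (kwedge j x) + kwedge j (kdelta t x) = t j *: x.
Proof.
apply/ffunP => J; rewrite ffunE [(t j *: x) J]ffunE.
by case: (boolP (j \in J)); [exact: kdelta_kwedge_in | exact: kdelta_kwedge_notin].
Qed.

Definition krestr (l : nat) (x : KT) : KT := [ffun J : {set 'I_n} => if #|J| == l then x J else 0].

Lemma krestr_homog l x : khomog l (krestr l x).
Proof. by move=> J /negbTE JNl; rewrite ffunE JNl. Qed.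

Lemma ksum_krestr (x : KT) : x = \sum_(l < n.+1) krestr l x.
Proof.
have cardJ (J : {set 'I_n}) : (#|J| < n.+1)%N by rewrite ltnS -[X in (_ <= X)%N]card_ord max_card.
apply/ffunP=> J; rewrite sum_ffunE (bigD1 (Ordinal (cardJ J))) //= ffunE eqxx.
rewrite big1 ?addr0 // => l /eqP lNJ; rewrite ffunE.
by case: eqP => // JE; case: lNJ; apply: val_inj.
Qed.

Variable h : {additive KT -> KT}.
Hypothesis h_homog : forall m x, khomog m x -> khomog m.+1 (h x).

Lemma h_support (Q : pred nat) (x : KT) :
  (forall J : {set 'I_n}, ~~ Q #|J| -> x J = 0) ->
  forall J : {set 'I_n}, (forall l, Q l -> #|J| != l.+1) -> h x J = 0.
Proof.
move=> xQ J JQ; rewrite (ksum_krestr x) raddf_sum sum_ffunE big1 // => l _.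
case: (boolP (Q l)) => Ql; first exact: (h_homog (@krestr_homog l x) (JQ l Ql)).
have -> : krestr l x = 0.
  by apply/ffunP=> K; rewrite !ffunE; case: eqP => // Kl; rewrite xQ // Kl.
by rewrite raddf0 ffunE.
Qed.

End Koszul.

Section SLinear.
Variables (S R : comPzRingType) (phi : {rmorphism S -> R}).

Lemma Slinear_zmod_morphism (V U : lmodType R) (f : V -> U) :
  Slinear phi f -> zmod_morphism f.
Proof.
move=> fS; have fD a b : f (a + b) = f a + f b by have := fS 1 a b; rewrite rmorph1 !scale1r.
by move=> a b; apply/eqP; rewrite eq_sym subr_eq -fD subrK.
Qed.

Definition Slinear_additive (V U : lmodType R) (f : V -> U) (fS : Slinear phi f) :
  {additive V -> U} := HB.pack f (GRing.isZmodMorphism.Build V U f (Slinear_zmod_morphism fS)).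

Lemma linear_Slinear (V U : lmodType R) (f : {linear V -> U}) : Slinear phi f.
Proof. by move=> s a b; rewrite linearP. Qed.

Lemma Slinear_comp (V U Y : lmodType R) (f : V -> U) (g : U -> Y) :
  Slinear phi f -> Slinear phi g -> Slinear phi (g \o f).
Proof. by move=> fS gS s a b /=; rewrite fS gS. Qed.

Lemma Slinear_iter (V : lmodType R) (f : V -> V) m : Slinear phi f -> Slinear phi (iter m f).
Proof. by move=> fS; elim: m => [|m IH] // s a b /=; rewrite IH fS. Qed.

Lemma Slinear_sum (V U : lmodType R) (I : finType) (F : I -> V -> U) :
  (forall i, Slinear phi (F i)) -> Slinear phi (fun a => \sum_i F i a).
Proof.
by move=> FS s a b; rewrite scaler_sumr -big_split; apply: eq_bigr => i _; apply: FS.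
Qed.

End SLinear.

Section XModel.
Variables (R : comPzRingType) (n k : nat) (t : 'I_n -> R) (p : 'I_k -> bool).
Local Notation KT := {ffun {set 'I_n} -> R^o}.
Local Notation XK := {ffun 'I_k -> KT}.
Local Notation dX M := (@dX1 R n k M).
Local Notation deltaX := (hX p (kdelta t)).
Local Notation epsX := (@epsX R n k p).
Variables (S : comPzRingType) (phi : {rmorphism S -> R}) (W : S).
Variables (D : 'M[R]_k) (lam : 'I_n -> 'M[R]_k).
Variables (sigma0 : R -> KT) (h0 : KT -> KT).
Hypothesis sdr : SDR_data phi t sigma0 h0.

Let sigma0_Slinear : Slinear phi (sigma0 : R^o -> KT). Proof. by case: sdr. Qed.
Let h0_Slinear : Slinear phi h0. Proof. by case: sdr => _ [_ [_ [_ [H _]]]]. Qed.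
Let sigma : {additive R^o -> KT} := Slinear_additive sigma0_Slinear.
Let h : {additive KT -> KT} := Slinear_additive h0_Slinear.
Let sigma_Slinear : Slinear phi sigma := sigma0_Slinear.
Let h_Slinear : Slinear phi h := h0_Slinear.

Let sigma_inI a : inI t a -> sigma a = 0. Proof. by case: sdr => _ [H _]; apply: H. Qed.
Let sigma_homog a : khomog 0 (sigma a). Proof. by case: sdr => _ [_ [H _]]; apply: H. Qed.
Let kdelta_sigma a : kdelta t (sigma a) = 0. Proof. by case: sdr => _ [_ [_ [H _]]]; apply: H. Qed.
Let h_homog m x : khomog m x -> khomog m.+1 (h x).
Proof. by case: sdr => _ [_ [_ [_ [_ [H _]]]]]; apply: H. Qed.
Let pi_sigma a : inI t (sigma a set0 - a).
Proof. by case: sdr => _ [_ [_ [_ [_ [_ [H _]]]]]]; apply: H. Qed.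
Let sigma_pi (x : KT) : sigma (x set0) = x + kdelta t (h x) + h (kdelta t x).
Proof. by case: sdr => _ [_ [_ [_ [_ [_ [_ [H _]]]]]]]; apply: H. Qed.
Let hh (x : KT) : h (h x) = 0. Proof. by case: sdr => _ [_ [_ [_ [_ [_ [_ [_ [H _ _]]]]]]]]; apply: H. Qed.
Let h_sigma a : h (sigma a) = 0. Proof. by case: sdr => _ [_ [_ [_ [_ [_ [_ [_ [_ H _]]]]]]]]; apply: H. Qed.
Let pi_h (x : KT) : inI t (h x set0). Proof. by case: sdr => _ [_ [_ [_ [_ [_ [_ [_ [_ _ H]]]]]]]]; apply: H. Qed.

Fact dX1_is_linear (M : 'M[R]_k) : linear (dX M).
Proof.
move=> c y z; apply/ffunP=> i; rewrite !ffunE scaler_sumr -big_split /=.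
by apply: eq_bigr => j _; rewrite !ffunE scalerDr !scalerA mulrC.
Qed.
HB.instance Definition _ M := GRing.isLinear.Build R XK XK _ (dX M) (dX1_is_linear M).

Fact hX_is_zmod_morphism (f : {additive KT -> KT}) : zmod_morphism (hX p f).
Proof. by move=> y z; apply/ffunP=> i; rewrite !ffunE raddfB scalerBr. Qed.
HB.instance Definition _ (f : {additive KT -> KT}) :=
  GRing.isZmodMorphism.Build XK XK (hX p f) (hX_is_zmod_morphism f).

Fact epsX_is_linear : linear epsX.
Proof. by move=> c y z; apply/matrixP=> i j; rewrite !mxE !ffunE mulrDr mulrCA. Qed.
HB.instance Definition _ := GRing.isLinear.Build R XK 'cV[R]_k _ epsX epsX_is_linear.

Lemma sum_scalar_mx (V : lmodType R) (a : R) (F : 'I_k -> V) i :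
  \sum_l (a%:M : 'M[R]_k) i l *: F l = a *: F i.
Proof.
rewrite (bigD1 i) //= big1 ?addr0; first by rewrite mxE eqxx mulr1n.
by move=> l /negbTE li; rewrite mxE eq_sym li mulr0n scale0r.
Qed.

Lemma dX1_mul (M N : 'M[R]_k) z : dX M (dX N z) = dX (M *m N) z.
Proof.
apply/ffunP=> i; rewrite !ffunE.
under eq_bigr => j _ do rewrite ffunE scaler_sumr.
rewrite exchange_big /=; apply: eq_bigr => l _; rewrite mxE scaler_suml.
by apply: eq_bigr => j _; rewrite scalerA.
Qed.

Lemma dX1D (M N : 'M[R]_k) z : dX (M + N) z = dX M z + dX N z.
Proof.
apply/ffunP=> i; rewrite !ffunE -big_split /=.
by apply: eq_bigr => j _; rewrite mxE scalerDl.
Qed.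

Lemma dX1_scalar a z : dX a%:M z = a *: z.
Proof. by apply/ffunP=> i; rewrite !ffunE sum_scalar_mx. Qed.

Lemma sign_odd_mx (M : 'M[R]_k) (V : lmodType R) i j (y : V) : odd_mx p M ->
  (-1) ^+ p i *: (M i j *: y) = - (M i j *: ((-1) ^+ p j *: y)).
Proof.
move=> Mo; have [pij|/negbTE pij] := eqVneq (p i) (p j).
  by rewrite Mo // !scale0r scaler0 oppr0.
rewrite !scalerA mulrC -scaleNr; congr (_ *: _); rewrite -mulrN.
by congr (_ * _); move: pij; case: (p i); case: (p j); rewrite ?opprK.
Qed.

Lemma hX_dX1 (f : {linear KT -> KT}) (M : 'M[R]_k) z : odd_mx p M ->
  hX p f (dX M z) = - dX M (hX p f z).
Proof.
move=> Mo; apply/ffunP=> i; rewrite !ffunE raddf_sum scaler_sumr -sumrN.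
apply: eq_bigr => j _; rewrite ffunE -sign_odd_mx //.
by congr (_ *: _); exact: linearZ_LR.
Qed.

Lemma hXZ (f : {linear KT -> KT}) c z : hX p f (c *: z) = c *: hX p f z.
Proof.
apply/ffunP=> i; rewrite !ffunE !scalerA mulrC -scalerA; congr (_ *: _).
exact: linearZ_LR.
Qed.

Lemma hXE (f : KT -> KT) z i : hX p f z i = (-1) ^+ p i *: f (z i).
Proof. by rewrite ffunE. Qed.

Lemma hX_comp (f : {additive KT -> KT}) (g : KT -> KT) z :
  hX p f (hX p g z) = [ffun i => f (g (z i))].
Proof.
apply/ffunP=> i; rewrite !ffunE.
by case: (p i); rewrite ?expr0 ?scale1r // expr1 !scaleN1r raddfN opprK.
Qed.

Definition piX (z : XK) : 'cV[R]_k := \col_i z i set0.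

Fact piX_is_linear : linear piX.
Proof. by move=> c y z; apply/matrixP=> i j; rewrite !mxE !ffunE. Qed.
HB.instance Definition _ := GRing.isLinear.Build R XK 'cV[R]_k _ piX piX_is_linear.

Lemma piX_dX1 (M : 'M[R]_k) z : piX (dX M z) = M *m piX z.
Proof.
apply/matrixP=> i j; rewrite !mxE ffunE sum_ffunE (ord1 j).
by apply: eq_bigr => l _; rewrite ffunE mxE.
Qed.

Lemma epsX_dX1 (M : 'M[R]_k) z : odd_mx p M -> epsX (dX M z) = (-1) ^+ n *: (M *m epsX z).
Proof.
move=> Mo; apply/matrixP=> i j; rewrite !mxE ffunE sum_ffunE !mulr_sumr.
apply: eq_bigr => l _; rewrite !ffunE mxE /GRing.scale /=.
have [pil|pil] := eqVneq (p i) (p l); first by rewrite Mo // !(mul0r, mulr0).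
have -> : (-1) ^+ (n * p i) = (-1) ^+ n * (-1) ^+ (n * p l) :> R.
  by move: pil; case: (p i); case: (p l); rewrite //= ?muln0 ?muln1 ?expr0 ?mulr1 -?expr2 ?sqrr_sign.
ring.
Qed.

Lemma epsX_deltaX z : epsX (deltaX z) = 0.
Proof. by apply/matrixP=> i j; rewrite !mxE ffunE ffunZE kdelta_setT scaler0 mulr0. Qed.

Definition inIX (a : 'cV[R]_k) : Prop := forall i, inI t (a i 0).

Lemma inIX_mul (M : 'M[R]_k) a : inIX a -> inIX (M *m a).
Proof. by move=> Ia i; rewrite mxE; apply: inI_sum => j; apply: inIMl. Qed.


Local Notation sigX := (@sigX R n k sigma).
Local Notation hXK := (hX p h).
Definition PX (z : XK) : XK := sigX (piX z).

Lemma sigX_inIX a : inIX a -> sigX a = 0.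
Proof. by move=> Ia; apply/ffunP=> i; rewrite !ffunE sigma_inI. Qed.

Lemma sigX_eqmodt a b : eqmodt t a b -> sigX a = sigX b.
Proof.
move=> ab; apply/ffunP=> i; apply/eqP; rewrite !ffunE -subr_eq0 -raddfB.
by rewrite sigma_inI // -mxE; apply: ab.
Qed.

Hypothesis D_odd : odd_mx p D.
Hypothesis DD : D *m D = (phi W)%:M.

Lemma h_phiZ s x : h (phi s *: x) = phi s *: h x.
Proof. by have := h_Slinear s x 0; rewrite !addr0 raddf0 addr0. Qed.

Lemma hX_hX z : hXK (hXK z) = 0.
Proof. by apply/ffunP=> i; rewrite hX_comp !ffunE hh. Qed.

Lemma PX_def z : PX z = z + deltaX (hXK z) + hXK (deltaX z).
Proof. by apply/ffunP=> i; rewrite hX_comp hX_comp !ffunE mxE sigma_pi. Qed.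

Lemma PX_dX_hX z : PX (dX D (hXK z)) = 0.
Proof.
apply: sigX_inIX; rewrite piX_dX1; apply: inIX_mul => i.
by rewrite !mxE ffunE ffunZE; case: (p i); rewrite ?scaleN1r ?scale1r ?ffunE; [apply: inIN|].
Qed.

Lemma deltaX_dX z : deltaX (dX D z) = - dX D (deltaX z).
Proof. exact: hX_dX1. Qed.

Lemma hX_dXdX z : hXK (dX D (dX D z)) = dX D (dX D (hXK z)).
Proof.
rewrite !dX1_mul DD !dX1_scalar; apply/ffunP=> i.
by rewrite !ffunE h_phiZ !scalerA mulrC.
Qed.

Lemma hX_sigX a : hXK (sigX a) = 0.
Proof. by apply/ffunP=> i; rewrite !ffunE h_sigma scaler0. Qed.

Lemma deltaX_sigX a : deltaX (sigX a) = 0.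
Proof. by apply/ffunP=> i; rewrite !ffunE kdelta_sigma scaler0. Qed.

Lemma eqmodt_mul (M : 'M[R]_k) a b : eqmodt t a b -> eqmodt t (M *m a) (M *m b).
Proof.
move=> ab i; rewrite !mxE -sumrB; apply: inI_sum => j.
by rewrite -mulrBr; apply/inIMl/ab.
Qed.

Lemma eqmodt_refl (a : 'cV[R]_k) : eqmodt t a a.
Proof. by move=> i; rewrite subrr; apply: inI0. Qed.

Lemma eqmodt_addr (a b c : 'cV[R]_k) : eqmodt t a b -> eqmodt t (a + c) (b + c).
Proof. by move=> ab i; rewrite !mxE opprD addrACA subrr addr0; apply: ab. Qed.

Lemma eqmodt_trans (a b c : 'cV[R]_k) : eqmodt t a b -> eqmodt t b c -> eqmodt t a c.
Proof.
move=> ab bc i; have -> : a i 0 - c i 0 = (a i 0 - b i 0) + (b i 0 - c i 0).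
  by rewrite addrA subrK.
exact: inID.
Qed.

Lemma sigX_mul_PX a : sigX (D *m a) = PX (dX D (sigX a)).
Proof.
apply: sigX_eqmodt; rewrite /PX piX_dX1; apply: eqmodt_mul => i.
by rewrite !mxE ffunE -/(sigma _ set0) -opprB; apply/inIN/pi_sigma.
Qed.

Local Notation hdX := (hd (dX D) hXK).
Local Notation psi := (psi p D h sigma).

Lemma sig_infE a : sig_inf p D h sigma a = \sum_(m < n.+1) iter m hdX (sigX a).
Proof. by []. Qed.

Lemma psi_eqmodt a b : eqmodt t a b -> psi a = psi b.
Proof. by move=> ab; rewrite /psi !sig_infE (sigX_eqmodt ab). Qed.

Lemma psi_dX a : psi (D *m a) = ((-1) ^+ n *: D) *m psi a.
Proof.
rewrite /psi !sig_infE sigX_mul_PX !raddf_sum; apply: eq_bigr => m _ /=.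
rewrite (iter_hd_P_d hX_hX PX_def PX_dX_hX deltaX_dX hX_dXdX) /= ?hX_sigX ?deltaX_sigX //.
by rewrite raddfD /= epsX_deltaX add0r epsX_dX1 // scalemxAl.
Qed.


Definition xhomog m (z : XK) : Prop := forall i, khomog m (z i).

Lemma xhomog_dX (M : 'M[R]_k) m z : xhomog m z -> xhomog m (dX M z).
Proof.
move=> zm i J Jm; rewrite ffunE sum_ffunE big1 // => l _.
by rewrite ffunZE zm // scaler0.
Qed.

Lemma xhomog_iter_sigX m a : xhomog m (iter m hdX (sigX a)).
Proof.
elim: m => [|m IH] i J Jm; first by rewrite ffunE sigma_homog.
by rewrite iterS ffunE ffunZE (h_homog (xhomog_dX D IH i)) // scaler0.
Qed.

Lemma epsX_xhomog m z : m != n -> xhomog m z -> epsX z = 0.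
Proof.
move=> mn zm; apply/matrixP=> i j; rewrite !mxE zm ?mulr0 //.
by rewrite cardsT card_ord eq_sym.
Qed.

Lemma psi_top a : psi a = epsX (iter n hdX (sigX a)).
Proof.
rewrite /psi sig_infE raddf_sum big_ord_recr /= big1 ?add0r // => m _ /=.
by apply: (epsX_xhomog _ (@xhomog_iter_sigX m a)); rewrite neq_ltn ltn_ord.
Qed.

Definition xdeg_ge m (z : XK) : Prop := forall i (J : {set 'I_n}), (#|J| < m)%N -> z i J = 0.

Lemma xdeg_ge_hX m z : xdeg_ge m z -> xdeg_ge m.+1 (hXK z).
Proof.
move=> zm i J Jm; rewrite ffunE ffunZE (@h_support _ _ h h_homog (fun l => m <= l)%N).
- by rewrite scaler0.
- by move=> K; rewrite -ltnNge; apply: zm.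
- by move=> l ml; apply: contraTneq Jm => ->; rewrite ltnS -leqNgt.
Qed.

Lemma xdeg_ge_dX (M : 'M[R]_k) m z : xdeg_ge m z -> xdeg_ge m (dX M z).
Proof.
move=> zm i J Jm; rewrite ffunE sum_ffunE big1 // => l _.
by rewrite ffunZE zm // scaler0.
Qed.

Lemma xdeg_ge_iter j m z : xdeg_ge m z -> xdeg_ge (j + m)%N (iter j hdX z).
Proof. by elim: j => [|j IH] //= zm; apply/xdeg_ge_hX/xdeg_ge_dX/IH. Qed.

Lemma epsX_xdeg_ge z : xdeg_ge n.+1 z -> epsX z = 0.
Proof. by move=> zn; apply/matrixP=> i j; rewrite !mxE zn ?mulr0 // cardsT card_ord. Qed.

Definition xparity (b : bool) (z : XK) : Prop :=
  forall i (J : {set 'I_n}), p i (+) odd #|J| != b -> z i J = 0.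

Lemma xparityD b y z : xparity b y -> xparity b z -> xparity b (y + z).
Proof. by move=> yb zb i J iJ; rewrite !ffunE yb ?zb ?addr0. Qed.

Lemma xparityN b z : xparity b z -> xparity b (- z).
Proof. by move=> zb i J iJ; rewrite !ffunE zb ?oppr0. Qed.

Lemma xparity_sum b (I : finType) (F : I -> XK) :
  (forall i, xparity b (F i)) -> xparity b (\sum_i F i).
Proof.
move=> Fb; elim/big_rec: _ => [i J _|i z _]; first by rewrite !ffunE.
exact: xparityD.
Qed.

Lemma xparity_dX (M : 'M[R]_k) b z : odd_mx p M -> xparity b z -> xparity (~~ b) (dX M z).
Proof.
move=> Mo zb i J iJ; rewrite ffunE sum_ffunE big1 // => l _; rewrite ffunZE.
have [pil|pil] := eqVneq (p i) (p l); first by rewrite Mo // scale0r.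
have pl : p l = ~~ p i by move: pil; case: (p i); case: (p l).
by rewrite zb ?scaler0 // pl addNb eqb_negLR.
Qed.

Lemma xparity_hX b z : xparity b z -> xparity (~~ b) (hXK z).
Proof.
move=> zb i J iJ; rewrite ffunE ffunZE.
rewrite (@h_support _ _ h h_homog (fun l => odd l == p i (+) b)) ?scaler0 // => [K KN|l /eqP lb].
  by apply: zb; apply: contra KN => /eqP <-; rewrite addKb.
by apply: contraTneq iJ => ->; rewrite /= lb addbN addKb eqxx.
Qed.

Lemma xparity_iter b m z : xparity b z -> xparity b (iter m hdX z).
Proof.
elim: m => [|m IH] //= zb; rewrite -[b]negbK.
exact/xparity_hX/xparity_dX/IH.
Qed.

Lemma xparity_sigX b a : vhomog p b a -> xparity b (sigX a).
Proof.
move=> ab i J iJ; rewrite ffunE.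
have [J0|J0] := eqVneq #|J| 0%N; last exact: sigma_homog.
by rewrite ab ?raddf0 ?ffunE //; move: iJ; rewrite J0 addbF.
Qed.

Lemma epsX_xparity b z : xparity b z -> vhomog (pshift n p) b (epsX z).
Proof. by move=> zb i ib; rewrite mxE zb ?mulr0 // cardsT card_ord. Qed.

Lemma psi_vhomog b a : vhomog p b a -> vhomog (pshift n p) b (psi a).
Proof.
move=> ab; rewrite /psi sig_infE; apply/epsX_xparity/xparity_sum => m.
exact/xparity_iter/xparity_sigX.
Qed.

Hypothesis lam_odd : forall j, odd_mx p (lam j).
Hypothesis lamD : forall j, lam j *m D + D *m lam j = (t j)%:M.

Definition lamfold (s : seq 'I_n) (v : 'cV[R]_k) : 'cV[R]_k :=
  foldr (fun j w => lam j *m w) v s.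

Fact lamfold_is_linear s : linear (lamfold s).
Proof. by move=> c u v; elim: s => [|j s IH] //=; rewrite IH mulmxDr scalemxAr. Qed.
HB.instance Definition _ s :=
  GRing.isLinear.Build R 'cV[R]_k 'cV[R]_k _ (lamfold s) (lamfold_is_linear s).

Lemma vhomog_mul_odd (M : 'M[R]_k) b v :
  odd_mx p M -> vhomog p b v -> vhomog p (~~ b) (M *m v).
Proof.
move=> Mo vb i ib; rewrite mxE big1 // => j _.
have [pij|pij] := eqVneq (p i) (p j); first by rewrite Mo // mul0r.
have pj : p j = ~~ p i by move: pij; case: (p i); case: (p j).
by rewrite vb ?mulr0 // pj eqb_negLR.
Qed.

Lemma lamfold_vhomog s b v : vhomog p b v -> vhomog p (b (+) odd (size s)) (lamfold s v).
Proof.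
move=> vb; elim: s => [|j s IH] /=; first by rewrite addbF.
by rewrite addbN; apply: vhomog_mul_odd.
Qed.

Lemma lamfold_dX s v :
  eqmodt t (lamfold s (D *m v)) ((-1) ^+ size s *: (D *m lamfold s v)).
Proof.
elim: s => [|j s IH] /=; first by move=> i; rewrite scale1r subrr; apply: inI0.
apply: eqmodt_trans (eqmodt_mul (lam j) IH) _ => i.
have lamDE : lam j *m D = (t j)%:M - D *m lam j by rewrite -lamD addrK.
rewrite -scalemxAr (mulmxA (lam j)) lamDE mulmxBl -mulmxA scalerBr exprS mulN1r scaleNr.
set X := _ *: (_ *m lamfold s v); set Y := _ *: (D *m _).
have -> : (X - Y) i 0 - (- Y) i 0 = X i 0 by rewrite !mxE opprK subrK.
by rewrite /X mul_scalar_mx !mxE mulrCA; apply: inI_t.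
Qed.

Local Notation theta := (theta lam).

Lemma thetaE v : theta v = (-1) ^+ n *: lamfold (enum 'I_n) v.
Proof. by []. Qed.

Fact theta_is_linear : linear theta.
Proof. by move=> c u v; rewrite !thetaE linearP scalerDr !scalerA mulrC. Qed.
HB.instance Definition _ :=
  GRing.isLinear.Build R 'cV[R]_k 'cV[R]_k _ theta theta_is_linear.

Lemma theta_vhomog b v : vhomog (pshift n p) b v -> vhomog p b (theta v).
Proof.
move=> vb; have vb' : vhomog p (b (+) odd n) v.
  by move=> i ib; apply: vb; apply: contra ib => /eqP <-; rewrite addbK.
move=> i ib; rewrite thetaE mxE (@lamfold_vhomog (enum 'I_n) _ _ vb') ?mulr0 //.
by rewrite size_enum_ord -addbA addbb addbF.
Qed.

Lemma theta_dX v : eqmodt t (theta (((-1) ^+ n *: D) *m v)) (D *m theta v).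
Proof.
move=> i; rewrite !thetaE -scalemxAl linearZ /= -scalemxAr scalerA -expr2 sqrr_sign.
rewrite scale1r; have := lamfold_dX (enum 'I_n) v i.
by rewrite size_enum_ord !mxE.
Qed.

Local Notation dtotX := (dtot (dX D) deltaX).

Definition liftX (j : 'I_n) (z : XK) : XK := hX p (kwedge j) z - dX (lam j) z.

Fact liftX_is_linear j : linear (liftX j).
Proof.
by move=> c y z; rewrite /liftX raddfD /= hXZ linearP /= scalerBr opprD addrACA.
Qed.
HB.instance Definition _ j := GRing.isLinear.Build R XK XK _ (liftX j) (liftX_is_linear j).

Lemma dtot_liftX j z : dtotX (liftX j z) = - liftX j (dtotX z).
Proof.
apply/eqP; rewrite -addr_eq0; apply/eqP.
apply: (@dtot_sub_anticomm _ _ _ (hX p (kwedge j)) (dX (lam j)) (fun y => t j *: y)) => y /=.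
- by rewrite hX_dX1 // addrN.
- by rewrite hX_dX1 // addNr.
- by apply/ffunP=> i; rewrite !hX_comp !ffunE kdelta_kwedge.
- by rewrite !dX1_mul -dX1D addrC lamD dX1_scalar.
Qed.

Definition embX (v : 'cV[R]_k) : XK := [ffun i => [ffun J => if J == set0 then v i 0 else 0]].

Fact embX_is_linear : linear embX.
Proof.
move=> c u v; apply/ffunP=> i; apply/ffunP=> J; rewrite !ffunE.
by case: eqP; rewrite ?mxE ?scaler0 ?addr0.
Qed.
HB.instance Definition _ := GRing.isLinear.Build R 'cV[R]_k XK _ embX embX_is_linear.

Lemma deltaX_embX v : deltaX (embX v) = 0.
Proof.
apply/ffunP=> i; apply/ffunP=> J; rewrite !ffunE big1 ?scaler0 // => l _.
rewrite /embX !ffunE; suff /negbTE -> : l |: J != set0 by rewrite mulr0.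
by apply/set0Pn; exists l; rewrite setU11.
Qed.

Lemma dX1_embX (M : 'M[R]_k) v : dX M (embX v) = embX (M *m v).
Proof.
apply/ffunP=> i; apply/ffunP=> J; rewrite !ffunE sum_ffunE mxE.
have [->|J0] := eqVneq J set0; first by apply: eq_bigr => l _; rewrite !ffunE eqxx.
by rewrite big1 // => l _; rewrite /embX !ffunE (negbTE J0) scaler0.
Qed.

Lemma dtot_embX v : dtotX (embX v) = embX (D *m v).
Proof. by rewrite /dtot /= dX1_embX deltaX_embX addr0. Qed.

Lemma piX_embX v : piX (embX v) = v.
Proof. by apply/matrixP=> i j; rewrite (ord1 j) !mxE !ffunE eqxx. Qed.

Lemma piX_liftX j z : piX (liftX j z) = - (lam j *m piX z).
Proof.
rewrite /liftX raddfB /= piX_dX1 -[RHS]add0r; congr (_ - _).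
by apply/matrixP=> i c; rewrite !mxE ffunE ffunZE kwedge_set0 scaler0.
Qed.


Definition klift (s : seq 'I_n) (v : 'cV[R]_k) : XK := foldr liftX (embX v) s.

Fact klift_is_linear s : linear (klift s).
Proof. by move=> c u v; elim: s => [|j s IH] /=; rewrite ?linearP // IH linearP. Qed.
HB.instance Definition _ s := GRing.isLinear.Build R 'cV[R]_k XK _ (klift s) (klift_is_linear s).

Lemma dtot_klift s v : dtotX (klift s v) = (-1) ^+ size s *: klift s (D *m v).
Proof.
elim: s => [|j s IH] /=; first by rewrite scale1r dtot_embX.
by rewrite dtot_liftX IH linearZ /= exprS mulN1r scaleNr.
Qed.

Lemma piX_klift s v : piX (klift s v) = (-1) ^+ size s *: lamfold s v.
Proof.
elim: s => [|j s IH] /=; first by rewrite scale1r piX_embX.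
by rewrite piX_liftX IH -scalemxAr exprS mulN1r scaleNr.
Qed.

Lemma PX_klift v : PX (klift (enum 'I_n) v) = sigX (theta v).
Proof. by rewrite /PX piX_klift size_enum_ord. Qed.

Lemma liftXE j z i (J : {set 'I_n}) :
  liftX j z i J = (-1) ^+ p i * kwedge j (z i) J - dX (lam j) z i J.
Proof. by rewrite /liftX !ffunBE hXE ffunZE. Qed.

Lemma dX1_eq0 (M : 'M[R]_k) (z : XK) i (J : {set 'I_n}) : (forall l, z l J = 0) -> dX M z i J = 0.
Proof. by move=> zJ; rewrite ffunE sum_ffunE big1 // => l _; rewrite ffunZE zJ scaler0. Qed.

Lemma klift_support s v i (J : {set 'I_n}) :
  ~~ (J \subset [set x in s]) -> klift s v i J = 0.
Proof.
elim: s i J => [|j s IH] i J /= Js.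
  by rewrite !ffunE; case: eqP => // J0; rewrite J0 sub0set in Js.
have Js' : ~~ (J \subset [set x in s]).
  apply: contra Js => /subset_trans; apply; apply/subsetP => x.
  by rewrite !inE => ->; rewrite orbT.
rewrite liftXE dX1_eq0 => [|l]; last exact: IH.
rewrite kwedgeE; case: ifP => jJ; last by rewrite !mulr0 subr0.
rewrite IH ?mulr0 ?subr0 //; apply: contra Js => /subsetP Js.
apply/subsetP => x xJ; rewrite inE in_cons; have [//|xj /=] := eqVneq x j.
by move: (Js x); rewrite in_setD1 xj xJ inE => ->.
Qed.

Lemma klift_top s v i : sorted (relpre val ltn) s ->
  klift s v i [set x in s] = (-1) ^+ (size s * p i) * v i 0.
Proof.
elim: s => [|j s IH] /= s_sorted.
  have -> : [set x in [::]] = set0 :> {set 'I_n} by apply/setP => x; rewrite !inE.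
  by rewrite !ffunE eqxx mul1r.
have j_min : all (relpre val ltn j) s.
  by apply: order_path_min s_sorted => ? ? ?; apply: ltn_trans.
have jNs : j \notin s by apply: contraTN j_min => js; apply/allPn; exists j; rewrite //= ltnn.
rewrite liftXE dX1_eq0 => [|l]; last first.
  by apply: klift_support; apply/subsetPn; exists j; rewrite !inE ?eqxx // (negbTE jNs).
rewrite subr0 kwedgeE inE in_cons eqxx /=.
have -> : [set x in j :: s] :\ j = [set x in s].
  by apply/setP => x; rewrite in_setD1 !inE; case: eqP => //= ->; rewrite (negbTE jNs).
have -> : ksign R [set x in j :: s] j = 1.
  rewrite /ksign; suff -> : [set l in [set x in j :: s] | (l < j)%N] = set0 by rewrite cards0.
  apply/setP => x; rewrite !inE; case: eqP => [->|_ /=]; first by rewrite ltnn andbF.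
  by case xs: (x \in s); rewrite //= ltnNge (ltnW (allP j_min x xs)).
by rewrite mul1r IH ?(path_sorted s_sorted) // mulSn exprD mulrA.
Qed.

Lemma epsX_klift v : epsX (klift (enum 'I_n) v) = v.
Proof.
have sorted_enum : sorted (relpre val ltn) (enum 'I_n).
  by rewrite -sorted_map val_enum_ord iota_ltn_sorted.
apply/matrixP=> i j; rewrite (ord1 j) mxE.
have -> : [set: 'I_n] = [set x in enum 'I_n] by apply/setP => x; rewrite !inE mem_enum.
by rewrite klift_top // size_enum_ord mulrA -expr2 sqrr_sign mul1r.
Qed.

Lemma xparity_embX b v : vhomog (pshift n p) b v -> xparity (b (+) odd n) (embX v).
Proof.
move=> vb i J iJ; rewrite !ffunE; case: eqP => // J0; apply: vb.
by move: iJ; rewrite J0 cards0 /pshift /= addbF; apply: contra => /eqP <-; rewrite addbK.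
Qed.

Lemma xparity_liftX b j z : xparity b z -> xparity (~~ b) (liftX j z).
Proof.
move=> zb; apply: xparityD; last exact/xparityN/xparity_dX.
move=> i J iJ; rewrite hXE ffunZE kwedgeE; case: ifP => jJ; last by rewrite scaler0.
rewrite zb ?mulr0 ?scaler0 //; move: iJ; rewrite (cardsD1 j J) jJ /= addbN.
by apply: contra => /eqP <-.
Qed.

Lemma xparity_klift b v : vhomog (pshift n p) b v -> xparity b (klift (enum 'I_n) v).
Proof.
move=> vb; suff : xparity (b (+) odd n (+) odd (size (enum 'I_n))) (klift (enum 'I_n) v).
  by rewrite size_enum_ord -addbA addbb addbF.
elim: (enum 'I_n) => [|j s IH] /=; first by rewrite addbF; apply: xparity_embX.
by rewrite addbN; apply: xparity_liftX.
Qed.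

Local Notation dn := ((-1) ^+ n *: D).

Definition psi_theta_htpy (v : 'cV[R]_k) : 'cV[R]_k :=
  epsX (h_inf (dX D) hXK n (klift (enum 'I_n) v)).

Lemma epsX_dtot z : epsX (dtotX z) = dn *m epsX z.
Proof. by rewrite /dtot raddfD /= epsX_deltaX addr0 epsX_dX1 // scalemxAl. Qed.

Lemma dtot_klift_enum v : dtotX (klift (enum 'I_n) v) = klift (enum 'I_n) (dn *m v).
Proof. by rewrite dtot_klift size_enum_ord -linearZ /= scalemxAl. Qed.

Lemma psi_theta v : psi (theta v) - v = dn *m psi_theta_htpy v + psi_theta_htpy (dn *m v).
Proof.
have y_top : epsX (iter n hdX (hXK (klift (enum 'I_n) v))) = 0.
  by apply: epsX_xdeg_ge; rewrite -addn1; apply/xdeg_ge_iter/xdeg_ge_hX.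
have z_top : epsX (iter n.+1 hdX (klift (enum 'I_n) v)) = 0.
  by apply: epsX_xdeg_ge; rewrite -[X in xdeg_ge X]addn0; apply: xdeg_ge_iter.
have psi_thetaE : psi (theta v) = epsX (P_inf (dX D) hXK PX n (klift (enum 'I_n) v)).
  by rewrite /psi sig_infE /P_inf PX_klift.
have := congr1 epsX
  (P_inf_homotopy hX_hX PX_def PX_dX_hX deltaX_dX hX_dXdX n (klift (enum 'I_n) v)).
rewrite dtot_klift_enum !raddfD /= !epsX_dX1 // epsX_deltaX y_top z_top.
rewrite mulmx0 scaler0 !addr0 epsX_klift -psi_thetaE => ->.
by rewrite addrAC [v + _ - v]addrAC subrr add0r !scalemxAl.
Qed.


Lemma Slinear_hXK : Slinear phi hXK.
Proof. by move=> s y z; apply/ffunP=> i; rewrite !ffunE h_Slinear scalerDr !scalerA mulrC. Qed.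

Lemma Slinear_hdX : Slinear phi hdX.
Proof. exact: Slinear_comp (linear_Slinear phi (dX D)) Slinear_hXK. Qed.

Lemma Slinear_psi : Slinear phi psi.
Proof.
apply: Slinear_comp (linear_Slinear phi epsX); apply: Slinear_sum => m.
apply: Slinear_comp (Slinear_iter m Slinear_hdX) => s a b.
by apply/ffunP=> i; rewrite !ffunE !mxE sigma_Slinear.
Qed.

Lemma Slinear_psi_theta_htpy : Slinear phi psi_theta_htpy.
Proof.
apply: Slinear_comp (linear_Slinear phi epsX); apply: Slinear_sum => m.
apply: Slinear_comp (Slinear_iter m Slinear_hdX).
exact: Slinear_comp (linear_Slinear phi (klift (enum 'I_n))) Slinear_hXK.
Qed.

Lemma psi_theta_htpy_vhomog b v :
  vhomog (pshift n p) b v -> vhomog (pshift n p) (~~ b) (psi_theta_htpy v).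
Proof.
move=> vb; apply/epsX_xparity/xparity_sum => m.
exact/xparity_iter/xparity_hX/xparity_klift.
Qed.

Local Notation e := (e_idem p D h sigma lam).

Lemma psi_hf_morphism :
  (forall a b, eqmodt t a b -> psi a = psi b) /\ Slinear phi psi /\
  (forall b a, vhomog p b a -> vhomog (pshift n p) b (psi a)) /\
  (forall a, psi (D *m a) = dn *m psi a).
Proof. by do !split; [exact: psi_eqmodt | exact: Slinear_psi | exact: psi_vhomog | exact: psi_dX]. Qed.

Lemma theta_hf_morphism :
  Slinear phi theta /\ (forall b v, vhomog (pshift n p) b v -> vhomog p b (theta v)) /\
  (forall v, eqmodt t (theta (dn *m v)) (D *m theta v)).
Proof. by do !split; [exact: linear_Slinear | exact: theta_vhomog | exact: theta_dX]. Qed.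

Lemma psi_theta_homotopic : exists H : 'cV[R]_k -> 'cV[R]_k,
  [/\ Slinear phi H, forall b v, vhomog (pshift n p) b v -> vhomog (pshift n p) (~~ b) (H v) &
      forall v, psi (theta v) - v = dn *m H v + H (dn *m v)].
Proof.
exists psi_theta_htpy.
by split; [exact: Slinear_psi_theta_htpy | exact: psi_theta_htpy_vhomog | exact: psi_theta].
Qed.

Lemma e_idem_homotopic : exists H : 'cV[R]_k -> 'cV[R]_k,
  [/\ forall a b, eqmodt t a b -> eqmodt t (H a) (H b),
      forall s a b, eqmodt t (H (phi s *: a + b)) (phi s *: H a + H b),
      forall b a, vhomog p b a -> exists y, vhomog p (~~ b) y /\ eqmodt t (H a) y &
      forall a, eqmodt t (e (e a) - e a) (D *m H a + H (D *m a))].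
Proof.
pose H a := theta (psi_theta_htpy (psi a)).
have H_Slinear : Slinear phi H.
  exact: Slinear_comp (Slinear_comp Slinear_psi Slinear_psi_theta_htpy) (linear_Slinear _ _).
exists H; split=> [a b /psi_eqmodt ab|s a b|b a ab|a].
- by rewrite /H ab; apply: eqmodt_refl.
- by rewrite H_Slinear; apply: eqmodt_refl.
- exists (H a); split; last exact: eqmodt_refl.
  exact/theta_vhomog/psi_theta_htpy_vhomog/psi_vhomog.
- rewrite /e_idem -linearB /= psi_theta linearD /= -psi_dX.
  exact/eqmodt_addr/theta_dX.
Qed.

Lemma e_idem_top a :
  eqmodt t (e a) ((-1) ^+ n *: lamprod lam (epsX (iter n hdX (sigX a)))).
Proof. by rewrite /e_idem psi_top; apply: eqmodt_refl. Qed.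

End XModel.



Theorem theorem7p4
  (S R : comPzRingType) (phi : {rmorphism S -> R}) (W : S)
  (k : nat) (p : 'I_k -> bool) (D : 'M[R]_k)
  (n : nat) (t : 'I_n -> R) (lam : 'I_n -> 'M[R]_k)
  (sigma0 : R -> {ffun {set 'I_n} -> R^o})
  (h : {ffun {set 'I_n} -> R^o} -> {ffun {set 'I_n} -> R^o}) :
  odd_mx p D -> D *m D = (phi W)%:M ->
  quasi_regular t ->
  (forall j, odd_mx p (lam j)) ->
  (forall j, lam j *m D + D *m lam j = (t j)%:M) ->
  SDR_data phi t sigma0 h ->
  let psi := psi p D h sigma0 in
  let theta := theta lam in
  let e := e_idem p D h sigma0 lam in
  let dn := (-1) ^+ n *: D in
  [/\ (forall a b, eqmodt t a b -> psi a = psi b)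
      /\ Slinear phi psi
      /\ (forall b a, vhomog p b a -> vhomog (pshift n p) b (psi a))
      /\ (forall a, psi (D *m a) = dn *m psi a),
      Slinear phi theta
      /\ (forall b v, vhomog (pshift n p) b v -> vhomog p b (theta v))
      /\ (forall v, eqmodt t (theta (dn *m v)) (D *m theta v)),
      exists H : 'cV[R]_k -> 'cV[R]_k,
        [/\ Slinear phi H,
            (forall b v, vhomog (pshift n p) b v -> vhomog (pshift n p) (~~ b) (H v)) &
            (forall v, psi (theta v) - v = dn *m H v + H (dn *m v))],
      exists H : 'cV[R]_k -> 'cV[R]_k,
        [/\ (forall a b, eqmodt t a b -> eqmodt t (H a) (H b)),
            (forall s a b, eqmodt t (H (phi s *: a + b)) (phi s *: H a + H b)),
            (forall b a, vhomog p b a ->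
               exists y, vhomog p (~~ b) y /\ eqmodt t (H a) y) &
            (forall a, eqmodt t (e (e a) - e a) (D *m H a + H (D *m a)))] &
      forall a, eqmodt t (e a)
        ((-1) ^+ n *: lamprod lam (epsX p (iter n (fun z => hX p h (dX1 D z)) (sigX sigma0 a))))].
Proof.
move=> D_odd DD _ lam_odd lamD sdr psi theta e dn.
split.
- by apply: psi_hf_morphism; eassumption.
- by apply: theta_hf_morphism; eassumption.
- by apply: psi_theta_homotopic; eassumption.
- by apply: e_idem_homotopic; eassumption.
- by apply: e_idem_top; eassumption.
Qed.
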